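(* Let $D\in\mathcal{R}$. Then $L^+(D)=N^+(D)$, where $L^+(D)=\{T\in\mathcal{R}: T<D,\ |T|>|D|$, and there is no $S\in\mathcal{R}$ with $T<S<D\}$.
   Context: Let $n\ge 1$ and $\Phi^+=\{(i,j)\in\mathbb{Z}^2:1\le j<i\le n\}$, with rows $\mathcal{R}_k=\{(k,s)\in\Phi^+\}$ and columns $\mathcal{C}_k=\{(r,k)\in\Phi^+\}$. A rook placement is a subset $D\subseteq\Phi^+$ with $|D\cap\mathcal{R}_k|\le1$ and $|D\cap\mathcal{C}_k|\le1$ for all $k$; $\mathcal{R}$ is the set of rook placements. For $D\in\mathcal{R}$, $R_D$ is the $n\times n$ integer matrix with $(R_D)_{i,j}=\#\{(a,b)\in D:a\ge i,\ b\le j\}$ for $i>j$ and $0$ otherwise; $D\le D'$ means $R_D\le R_{D'}$ entrywise. Order on $\Phi^+$: $(a,b)\le(c,d)$ iff $a\le c$ and $b\ge d$. For $(i,j)\in D$, $C_{(i,j)}(D)$ is the set of integer pairs $(\alpha,\beta)$ such that: $i>\beta\ge\alpha>j$; $D\cap\mathcal{R}_\alpha=\emptyset$ and $D\cap\mathcal{C}_\beta=\emptyset$; $D\cap\mathcal{R}_k\ne\emptyset$ and $D\cap\mathcal{C}_k\neq\emptyset$ for all $\alpha<k<\beta$; whenever $(p,q)\in D$, $(p,q)<(i,j)$ and $(p,q)\not<(\alpha,j)$, one has $(p,q)<(i,\beta)$; and if $\alpha\ne\beta$ then $D\cap\mathcal{R}_\beta\ne\emptyset$ and $D\cap\mathcal{C}_\alpha\ne\emptyset$.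 For $(\alpha,\beta)\in C_{(i,j)}(D)$ put $D^{\alpha,\beta}_{(i,j)}=(D\setminus\{(i,j)\})\cup\{(i,\beta),(\alpha,j)\}$, and let $N^+(D)$ be the set of all such $D^{\alpha,\beta}_{(i,j)}$ over $(i,j)\in D$ and $(\alpha,\beta)\in C_{(i,j)}(D)$. *)

(* Positions of Phi^+ are encoded 0-based:
   paper's (i,j) with 1 <= j < i <= n  <->  (i-1, j-1) : 'I_n * 'I_n with j < i. *)
From mathcomp Require Import all_boot.
Set Implicit Arguments. Unset Strict Implicit. Unset Printing Implicit Defensive.

Section Rooks.
Variable n : nat.
Notation pos := ('I_n * 'I_n)%type.

Definition Phi : {set pos} := [set p : pos | p.2 < p.1].

Definition rowD (D : {set pos}) (k : 'I_n) : {set pos} := [set p in D | p.1 == k].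
Definition colD (D : {set pos}) (k : 'I_n) : {set pos} := [set p in D | p.2 == k].

Definition rook (D : {set pos}) : bool :=
  [&& D \subset Phi,
      [forall k, #|rowD D k| <= 1] &
      [forall k, #|colD D k| <= 1]].

Definition rankmx (D : {set pos}) (i j : 'I_n) : nat :=
  if j < i then #|[set p in D | (i <= p.1) && (p.2 <= j)]| else 0.

Definition leR (D D' : {set pos}) : bool :=
  [forall i, forall j, rankmx D i j <= rankmx D' i j].
Definition ltR (D D' : {set pos}) : bool := leR D D' && (D != D').

Definition lePhi (x y : pos) : bool := (x.1 <= y.1) && (y.2 <= x.2).
Definition ltPhi (x y : pos) : bool := lePhi x y && (x != y).

Definition Lplus (D T : {set pos}) : Prop :=
  [/\ rook T, ltR T D, #|D| < #|T| &
      ~ exists S, [/\ rook S, ltR T S & ltR S D]].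

Definition Ccond (D : {set pos}) (i j alpha beta : 'I_n) : Prop :=
  [/\ beta < i /\ alpha <= beta /\ j < alpha,
      rowD D alpha = set0 /\ colD D beta = set0,
      (forall k : 'I_n, alpha < k < beta -> rowD D k != set0 /\ colD D k != set0),
      (forall p, p \in D -> ltPhi p (i, j) -> ~~ ltPhi p (alpha, j) -> ltPhi p (i, beta)) &
      (alpha != beta -> rowD D beta != set0 /\ colD D alpha != set0)].

Definition Dmove (D : {set pos}) (i j alpha beta : 'I_n) : {set pos} :=
  (D :\ (i, j)) :|: [set (i, beta); (alpha, j)].

Definition Nplus (D T : {set pos}) : Prop :=
  exists i j alpha beta, [/\ (i, j) \in D, Ccond D i j alpha beta &
                              T = Dmove D i j alpha beta].
End Rooks.

(* A placement X is compared with D through its rank counts rk X a b, the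
   number of rooks of X weakly below row a and weakly left of column b; a
   rook placement is determined by these counts.  Every elementary move of D
   at one of its rooks (i, j) -- deleting it, moving it up or right into an
   empty line, swapping it with a rook inside, or splitting it into (x, j)
   and (i, y) -- lowers the rank counts by exactly one on a rectangle
   rect i j x y and leaves them unchanged elsewhere ("drops_by").

   The key lemma [lift] says: if T <= D and the rank at a rook (i, j) of D
   strictly drops, then T lies below some elementary move of D at (i, j);
   the move is found by examining the entries where T and D agree.  A cover
   T of D with |T| > |D| must then be a split (a move with no more rooks
   than D would lie strictly between), and minimality of the split is
   exactly the list of conditions defining C_{(i,j)}(D).  Conversely, under
   those conditions any S strictly between a split and D would, by [lift],
   lie below a move with a smaller rectangle, which the conditions exclude.
*)
From mathcomp Require Import all_boot zify.
Set Implicit Arguments. Unset Strict Implicit. Unset Printing Implicit Defensive.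

Lemma card_sep (T' : finType) (A : {set T'}) (P : pred T') :
  #|A| = #|[set x in A | P x]| + #|[set x in A | ~~ P x]|.
Proof.
rewrite -(cardsID [set x | P x] A).
by congr (_ + _); apply: eq_card => x; rewrite !inE // andbC.
Qed.

Lemma card_eq1 (T' : finType) (A : {set T'}) x : #|[set y in A | y == x]| = (x \in A).
Proof.
case: (boolP (x \in A)) => xA.
  rewrite (_ : [set y in A | y == x] = [set x]) ?cards1 //.
  by apply/setP => y; rewrite !inE; case: eqP => [->|]; rewrite ?xA ?andbF.
apply/eqP; rewrite cards_eq0; apply/eqP/setP => y; rewrite !inE.
by case: eqP => [->|]; rewrite ?(negbTE xA) ?andbF.
Qed.

Section RankCounts.
Variable n : nat.
Local Notation pos := ('I_n * 'I_n)%type.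
Implicit Types (X : {set pos}) (p q : pos).

(* The rank count of X at (a, b): points of X weakly below row a and weakly
   left of column b.  For b < a < n this is the entry (R_X)_{a,b}. *)
Definition rk X (a b : nat) : nat := #|[set p in X | (a <= p.1) && (p.2 <= b)]|.

Definition row_seg X (a b : nat) : nat := #|[set p in X | (p.1 == a :> nat) && (p.2 <= b)]|.
Definition col_seg X (a b : nat) : nat := #|[set p in X | (a <= p.1) && (p.2 == b :> nat)]|.
Definition box X (a1 a2 b1 b2 : nat) : nat :=
  #|[set p in X | (a1 <= p.1 < a2) && (b1 < p.2 <= b2)]|.

Local Ltac same_card := let p := fresh "p" in
  apply: eq_card => p; rewrite !inE; case: (p \in _) => //=; apply/idP/idP => ?; lia.

Lemma rk_row X a b : rk X a b = rk X a.+1 b + row_seg X a b.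
Proof. by rewrite /rk (card_sep _ (fun p : pos => a < p.1)); congr (_ + _); same_card. Qed.

Lemma rk_col X a b : rk X a b.+1 = rk X a b + col_seg X a b.+1.
Proof. by rewrite /rk (card_sep _ (fun p : pos => p.2 <= b)); congr (_ + _); same_card. Qed.

Lemma rk_box X a1 a2 b1 b2 : a1 <= a2 -> b1 <= b2 ->
  rk X a1 b2 + rk X a2 b1 = rk X a2 b2 + rk X a1 b1 + box X a1 a2 b1 b2.
Proof.
move=> le_a le_b; pose strip b := #|[set p in X | (a1 <= p.1 < a2) && (p.2 <= b)]|.
have strip_rk b : rk X a1 b = rk X a2 b + strip b.
  by rewrite /rk (card_sep _ (fun p : pos => a2 <= p.1)); congr (_ + _); same_card.
have strip_box : strip b2 = strip b1 + box X a1 a2 b1 b2.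
  by rewrite /strip (card_sep _ (fun p : pos => p.2 <= b1)); congr (_ + _); same_card.
rewrite !strip_rk strip_box; lia.
Qed.

Lemma rk_bottom X b : rk X n b = 0.
Proof.
apply/eqP; rewrite cards_eq0; apply/eqP/setP => p; rewrite !inE.
by rewrite leqNgt ltn_ord andbF.
Qed.

Lemma rk_setU1 X q a b : q \notin X ->
  rk (q |: X) a b = rk X a b + ((a <= q.1) && (q.2 <= b)).
Proof.
move=> qX; rewrite /rk (card_sep _ (pred1 q)) card_eq1 !inE eqxx /= addnC.
congr (_ + _); apply: eq_card => p; rewrite !inE.
by case: (eqVneq p q) => [->|] /=; rewrite ?andbT ?andbF ?(negbTE qX).
Qed.

Lemma rk_setD1 X q a b : q \in X ->
  rk X a b = rk (X :\ q) a b + ((a <= q.1) && (q.2 <= b)).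
Proof.
move=> qX; rewrite /rk (card_sep _ (pred1 q)) card_eq1 !inE qX /= addnC.
congr (_ + _); apply: eq_card => p; rewrite !inE.
by case: (eqVneq p q) => [->|] /=; rewrite ?andbT ?andbF.
Qed.

End RankCounts.

Section RookOrder.
Variable n : nat.
Local Notation pos := ('I_n * 'I_n)%type.
Implicit Types (X Y D : {set pos}) (p q : pos).

Definition rookP X : Prop :=
  [/\ forall p, p \in X -> p.2 < p.1,
      forall p q, p \in X -> q \in X -> p.1 = q.1 :> nat -> p = q &
      forall p q, p \in X -> q \in X -> p.2 = q.2 :> nat -> p = q].

Lemma rookE X : rook X <-> rookP X.
Proof.
split.
- case/and3P => /subsetP in_Phi /forallP row1 /forallP col1; split.
  + by move=> p /in_Phi; rewrite inE.
  + move=> p q pX qX e; apply: (card_le1_eqP (row1 p.1)); rewrite !inE ?pX ?qX ?eqxx //=.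
    by apply/eqP/val_inj; rewrite /= -e.
  + move=> p q pX qX e; apply: (card_le1_eqP (col1 p.2)); rewrite !inE ?pX ?qX ?eqxx //=.
    by apply/eqP/val_inj; rewrite /= -e.
- case=> in_Phi row1 col1; apply/and3P; split.
  + by apply/subsetP => p pX; rewrite inE in_Phi.
  + apply/forallP => k; apply/card_le1_eqP => p q; rewrite !inE.
    by move=> /andP[pX /eqP ep] /andP[qX /eqP eq]; apply: row1; rewrite ?ep ?eq.
  + apply/forallP => k; apply/card_le1_eqP => p q; rewrite !inE.
    by move=> /andP[pX /eqP ep] /andP[qX /eqP eq]; apply: col1; rewrite ?ep ?eq.
Qed.

Lemma rookP_Phi X p : rookP X -> p \in X -> p.2 < p.1.
Proof. by case=> Phi _ _; apply: Phi. Qed.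

Lemma row_seg_le1 X a b : rookP X -> row_seg X a b <= 1.
Proof.
case=> _ row1 _; apply/card_le1_eqP => p q; rewrite !inE.
by move=> /andP[pX /andP[/eqP ep _]] /andP[qX /andP[/eqP eq _]]; apply: row1; rewrite ?ep ?eq.
Qed.

Lemma col_seg_le1 X a b : rookP X -> col_seg X a b <= 1.
Proof.
case=> _ _ col1; apply/card_le1_eqP => p q; rewrite !inE.
by move=> /andP[pX /andP[_ /eqP ep]] /andP[qX /andP[_ /eqP eq]]; apply: col1; rewrite ?ep ?eq.
Qed.

Lemma row_seg_mono X a b b' : b <= b' -> row_seg X a b <= row_seg X a b'.
Proof.
move=> le_b; apply: subset_leq_card; apply/subsetP => q; rewrite !inE.
by case/andP => -> /andP[-> le_q] /=; apply: leq_trans le_b.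
Qed.

Definition rank_le X Y : Prop := forall a b, b < a < n -> rk X a b <= rk Y a b.

Lemma leRP X Y : leR X Y <-> rank_le X Y.
Proof.
split.
- move=> /forallP le_XY a b /andP[lt_ba lt_an].
  have lt_bn : b < n by apply: ltn_trans lt_an.
  by have := le_XY (Ordinal lt_an) => /forallP /(_ (Ordinal lt_bn)); rewrite /rankmx /= lt_ba.
- move=> le_XY; apply/forallP => i; apply/forallP => j; rewrite /rankmx.
  by case: ifP => // lt_ji; apply: le_XY; rewrite lt_ji ltn_ord.
Qed.

Lemma ltRP X Y : ltR X Y <-> rank_le X Y /\ X != Y.
Proof. by rewrite /ltR -leRP; split => [/andP[]|[-> ->]]. Qed.

Lemma rank_le_trans X Y Z : rank_le X Y -> rank_le Y Z -> rank_le X Z.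
Proof. by move=> le_XY le_YZ a b h; apply: leq_trans (le_XY a b h) (le_YZ a b h). Qed.

Lemma pos_eqE p q : (q == p) = (q.1 == p.1 :> nat) && (q.2 == p.2 :> nat).
Proof. by case: p q => [p1 p2] [q1 q2]. Qed.

Lemma box_point X p : 0 < p.2 -> box X p.1 p.1.+1 p.2.-1 p.2 = (p \in X).
Proof.
move=> p2_gt0; rewrite /box -card_eq1; apply: eq_card => q; rewrite !inE pos_eqE.
by case: (q \in X) => //=; apply/idP/idP => ?; lia.
Qed.

Lemma row_seg_point X p : p.2 = 0 :> nat -> row_seg X p.1 0 = (p \in X).
Proof.
move=> p2_0; rewrite /row_seg -card_eq1; apply: eq_card => q; rewrite !inE pos_eqE.
by case: (q \in X) => //=; apply/idP/idP => ?; lia.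
Qed.

(* A rook placement is determined by its rank matrix: membership of a point
   of Phi is recovered from the rank counts around it. *)
Lemma rk_inj X Y : rookP X -> rookP Y ->
  (forall a b, b < a < n -> rk X a b = rk Y a b) -> X = Y.
Proof.
move=> [X_Phi _ _] [Y_Phi _ _] eq_rk.
have eq_rk' a b : b < a <= n -> rk X a b = rk Y a b.
  case/andP=> lt_ba; rewrite leq_eqVlt => /orP[/eqP->|lt_an]; first by rewrite !rk_bottom.
  by apply: eq_rk; rewrite lt_ba.
have in_Phi (p : pos) : p.2 < p.1 -> nat_of_bool (p \in X) = (p \in Y).
  move=> p_Phi; have p1n := ltn_ord p.1; case: (posnP p.2) => p2.
  - rewrite -!(row_seg_point _ p2); have := rk_row X p.1 0; have := rk_row Y p.1 0.
    by rewrite (eq_rk' p.1 0) ?(eq_rk' p.1.+1 0); lia.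
  - rewrite -!(box_point _ p2).
    have := rk_box X (leqnSn p.1) (leq_pred p.2); have := rk_box Y (leqnSn p.1) (leq_pred p.2).
    rewrite (eq_rk' p.1 p.2) ?(eq_rk' p.1.+1 p.2.-1) ?(eq_rk' p.1.+1 p.2) ?(eq_rk' p.1 p.2.-1);
      lia.
apply/setP => p; case: (boolP (p.2 < p.1)) => [/in_Phi|p_Phi].
  by case: (p \in X); case: (p \in Y).
by apply/idP/idP => [/X_Phi|/Y_Phi]; rewrite (negbTE p_Phi).
Qed.

Lemma rank_le_anti X Y : rookP X -> rookP Y -> rank_le X Y -> rank_le Y X -> X = Y.
Proof.
move=> rX rY le_XY le_YX; apply: rk_inj => // a b h.
by apply/eqP; rewrite eqn_leq le_XY ?le_YX.
Qed.

(* If X < D, some point of D already witnesses a strict rank inequality: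
   take the lowest row a with a strict entry; the row segment of D there is
   nonempty, and the strictness persists at the point of D it contains. *)
Lemma strict_point X D : rookP X -> rookP D -> rank_le X D -> X != D ->
  exists2 p, p \in D & rk X p.1 p.2 < rk D p.1 p.2.
Proof.
move=> rX rD le_XD neq_XD.
pose strict a := [exists b : 'I_n, (b < a < n) && (rk X a b < rk D a b)].
have [a0 strict_a0] : exists a, strict a.
  case: (boolP [exists a : 'I_n, strict a]) => [/existsP[a ?]|/existsPn none]; first by exists a.
  case/eqP: neq_XD; apply: rk_inj => // a b h; apply/eqP; rewrite eqn_leq le_XD //= leqNgt.
  have a_n : a < n by case/andP: h.
  have b_n : b < n by lia.
  apply/negP => lt_ab; have := none (Ordinal a_n).
  by rewrite negb_exists => /forallP/(_ (Ordinal b_n)); rewrite /= h lt_ab.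
have ub_strict a : strict a -> a <= n by case/existsP => b /andP[/andP[_ /ltnW]].
case: (ex_maxnP (ex_intro _ a0 strict_a0) ub_strict) => a /existsP[b /andP[lt_ban lt_b]] a_max.
have eq_below c : c <= a -> rk X a.+1 c = rk D a.+1 c.
  move=> le_ca; case: (ltngtP a.+1 n) => [lt_an||->]; [|lia|by rewrite !rk_bottom].
  apply/eqP; rewrite eqn_leq le_XD ?ltnS ?le_ca //= leqNgt; apply/negP => lt_c.
  have lt_cn : c < n by lia.
  suff : a.+1 <= a by rewrite ltnn.
  by apply: a_max; apply/existsP; exists (Ordinal lt_cn); rewrite /= ltnS le_ca lt_an lt_c.
have [D_row X_row] : 0 < row_seg D a b /\ row_seg X a b = 0.
  have := rk_row X a b; have := rk_row D a b; rewrite eq_below; last by lia.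
  have := row_seg_le1 a b rD; lia.
case/card_gt0P: D_row => q; rewrite !inE => /andP[qD /andP[/eqP q1 q2]].
exists q => //; rewrite q1.
have q_Phi : q.2 < q.1 := rookP_Phi rD qD.
have := rk_row X a q.2; have := rk_row D a q.2; rewrite eq_below; last by lia.
have : 0 < row_seg D a q.2 by apply/card_gt0P; exists q; rewrite !inE qD q1 eqxx leqnn.
have := row_seg_mono X a q2; lia.
Qed.

End RookOrder.

Section Moves.
Variable n : nat.
Local Notation pos := ('I_n * 'I_n)%type.
Implicit Types (X Y D T M : {set pos}) (p q : pos).

Definition row_free D (x : nat) : Prop := forall p, p \in D -> p.1 <> x :> nat.
Definition col_free D (y : nat) : Prop := forall p, p \in D -> p.2 <> y :> nat.

Lemma row_freeE D (x : 'I_n) : rowD D x = set0 <-> row_free D x.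
Proof.
split=> [row0 p pD e|free_x].
  have : p \in rowD D x by rewrite !inE pD; apply/eqP/val_inj.
  by rewrite row0 inE.
apply/setP => p; rewrite !inE; apply/negbTE/negP => /andP[pD /eqP e].
by apply: (free_x p pD); rewrite e.
Qed.

Lemma col_freeE D (y : 'I_n) : colD D y = set0 <-> col_free D y.
Proof.
split=> [col0 p pD e|free_y].
  have : p \in colD D y by rewrite !inE pD; apply/eqP/val_inj.
  by rewrite col0 inE.
apply/setP => p; rewrite !inE; apply/negbTE/negP => /andP[pD /eqP e].
by apply: (free_y p pD); rewrite e.
Qed.

Lemma rook_setD1 X q : rookP X -> rookP (X :\ q).
Proof.
case=> X_Phi row1 col1; split.
- by move=> p; rewrite inE => /andP[_ /X_Phi].
- by move=> p r; rewrite !inE => /andP[_ pX] /andP[_ rX]; apply: row1.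
- by move=> p r; rewrite !inE => /andP[_ pX] /andP[_ rX]; apply: col1.
Qed.

Lemma rook_setU1 X q : rookP X -> q.2 < q.1 -> row_free X q.1 -> col_free X q.2 ->
  rookP (q |: X) /\ q \notin X.
Proof.
case=> X_Phi row1 col1 q_Phi row_q col_q; split; last by apply/negP => /row_q.
split.
- by move=> p; rewrite !inE => /orP[/eqP ->|/X_Phi].
- move=> p r; rewrite !inE => /orP[/eqP ->|pX] /orP[/eqP ->|rX] // e.
  + by case: (row_q r rX); rewrite e.
  + by case: (row_q p pX); rewrite e.
  + exact: row1.
- move=> p r; rewrite !inE => /orP[/eqP ->|pX] /orP[/eqP ->|rX] // e.
  + by case: (col_q r rX); rewrite e.
  + by case: (col_q p pX); rewrite e.
  + exact: col1.
Qed.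

Lemma rook_del D (i j : 'I_n) : rookP D -> (i, j) \in D ->
  [/\ rookP (D :\ (i, j)), row_free (D :\ (i, j)) i & col_free (D :\ (i, j)) j].
Proof.
move=> rD ijD; have [_ row1 col1] := rD; split; first exact: rook_setD1.
- move=> p; rewrite !inE => /andP[ne_p pD] e.
  by move/eqP: ne_p; apply; apply: row1.
- move=> p; rewrite !inE => /andP[ne_p pD] e.
  by move/eqP: ne_p; apply; apply: col1.
Qed.

Lemma row_free_sub D D' x : D' \subset D -> row_free D x -> row_free D' x.
Proof. by move=> /subsetP sub free_x p /sub; apply: free_x. Qed.

Lemma col_free_sub D D' y : D' \subset D -> col_free D y -> col_free D' y.
Proof. by move=> /subsetP sub free_y p /sub; apply: free_y. Qed.

Lemma row_free_of D (x : 'I_n) : (forall l, (x, l) \notin D) -> row_free D x.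
Proof. by move=> none [k l] /= klD /val_inj ekx; move: (none l); rewrite -ekx klD. Qed.

Lemma col_free_of D (y : 'I_n) : (forall k, (k, y) \notin D) -> col_free D y.
Proof. by move=> none [k l] /= klD /val_inj ely; move: (none k); rewrite -ely klD. Qed.

Definition rect (i j x y a b : nat) : bool := (x < a <= i) && (j <= b < y).

Definition drops_by D M (i j x y : nat) : Prop :=
  forall a b, b < a -> rk D a b = rk M a b + rect i j x y a b.

Lemma delete_move D (i j : 'I_n) : rookP D -> (i, j) \in D ->
  [/\ rookP (D :\ (i, j)), #|D :\ (i, j)| <= #|D| & drops_by D (D :\ (i, j)) i j j i].
Proof.
move=> rD ijD; have [rM _ _] := rook_del rD ijD; split => //.
- by rewrite [in X in _ <= X](cardsD1 (i, j) D) ijD leq_addl.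
- by move=> a b lt_ba; rewrite (rk_setD1 a b ijD) /rect /=; congr (_ + _); lia.
Qed.

Lemma up_move D (i j x : 'I_n) : rookP D -> (i, j) \in D -> j < x < i -> row_free D x ->
  [/\ rookP ((x, j) |: (D :\ (i, j))), #|(x, j) |: (D :\ (i, j))| <= #|D| &
      drops_by D ((x, j) |: (D :\ (i, j))) i j x i].
Proof.
move=> rD ijD /andP[lt_jx lt_xi] free_x; have [rD' _ free_j] := rook_del rD ijD.
have [rM xj_new] := rook_setU1 (q := (x, j)) rD' lt_jx (row_free_sub (subsetDl D _) free_x) free_j.
split => //.
- by rewrite cardsU1 xj_new (cardsD1 (i, j) D) ijD.
- move=> a b lt_ba; rewrite (rk_setD1 a b ijD) (rk_setU1 a b xj_new) /rect /= -addnA.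
  by congr (_ + _); lia.
Qed.

Lemma right_move D (i j y : 'I_n) : rookP D -> (i, j) \in D -> j < y < i -> col_free D y ->
  [/\ rookP ((i, y) |: (D :\ (i, j))), #|(i, y) |: (D :\ (i, j))| <= #|D| &
      drops_by D ((i, y) |: (D :\ (i, j))) i j j y].
Proof.
move=> rD ijD /andP[lt_jy lt_yi] free_y; have [rD' free_i _] := rook_del rD ijD.
have [rM iy_new] := rook_setU1 (q := (i, y)) rD' lt_yi free_i (col_free_sub (subsetDl D _) free_y).
split => //.
- by rewrite cardsU1 iy_new (cardsD1 (i, j) D) ijD.
- move=> a b lt_ba; rewrite (rk_setD1 a b ijD) (rk_setU1 a b iy_new) /rect /= -addnA.
  by congr (_ + _); lia.
Qed.

Lemma split_move D (i j x y : 'I_n) : rookP D -> (i, j) \in D ->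
  j < x -> x <= y -> y < i -> row_free D x -> col_free D y ->
  [/\ rookP (Dmove D i j x y), #|Dmove D i j x y| = #|D|.+1 &
      drops_by D (Dmove D i j x y) i j x y].
Proof.
move=> rD ijD lt_jx le_xy lt_yi free_x free_y.
have -> : Dmove D i j x y = (i, y) |: ((x, j) |: (D :\ (i, j))).
  apply/setP => p; rewrite /Dmove !inE.
  by case: (p == (i, y)); case: (p == (x, j)); rewrite ?orbT ?orbF.
have [rD' free_i free_j] := rook_del rD ijD.
have [rD1 xj_new] := rook_setU1 (q := (x, j)) rD' lt_jx (row_free_sub (subsetDl D _) free_x) free_j.
have [rM iy_new] : rookP ((i, y) |: ((x, j) |: (D :\ (i, j)))) /\
                   (i, y) \notin (x, j) |: (D :\ (i, j)).
  apply: rook_setU1 => //= p; rewrite in_setU1 => /orP[/eqP -> /=|]; try lia.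
  - exact: free_i.
  - exact: (col_free_sub (subsetDl D _) free_y).
split => //.
- by rewrite cardsU1 iy_new cardsU1 xj_new (cardsD1 (i, j) D) ijD.
- move=> a b lt_ba.
  rewrite (rk_setD1 a b ijD) (rk_setU1 a b iy_new) (rk_setU1 a b xj_new) /rect /= -!addnA.
  by congr (_ + _); lia.
Qed.

Definition swap D (i j k l : 'I_n) : {set pos} :=
  (i, l) |: ((k, j) |: ((D :\ (i, j)) :\ (k, l))).

Lemma swap_move D (i j k l : 'I_n) : rookP D -> (i, j) \in D -> (k, l) \in D ->
  j < l -> l < k -> k < i ->
  [/\ rookP (swap D i j k l), #|swap D i j k l| = #|D| & drops_by D (swap D i j k l) i j k l].
Proof.
move=> rD ijD klD lt_jl lt_lk lt_ki; have [_ row1 col1] := rD.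
have [rD' free_i free_j] := rook_del rD ijD.
have klD' : (k, l) \in D :\ (i, j).
  by rewrite !inE klD andbT; apply/negP => /eqP[e _]; move: lt_ki; rewrite e ltnn.
have [rD0 _ _] := rook_del rD' klD'.
set D0 := (D :\ (i, j)) :\ (k, l).
have free_k : row_free D0 k.
  move=> p; rewrite !inE => /andP[ne_kl /andP[_ pD]] e.
  by move/eqP: ne_kl; apply; apply: row1.
have free_l : col_free D0 l.
  move=> p; rewrite !inE => /andP[ne_kl /andP[_ pD]] e.
  by move/eqP: ne_kl; apply; apply: col1.
have [rD1 kj_new] := rook_setU1 (q := (k, j)) rD0 (ltn_trans lt_jl lt_lk) free_k
  (col_free_sub (subsetDl _ _) free_j).
have [rM il_new] : rookP ((i, l) |: ((k, j) |: D0)) /\ (i, l) \notin (k, j) |: D0.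
  apply: (rook_setU1 rD1) => /= [|p|p]; first exact: ltn_trans lt_lk lt_ki.
  - rewrite in_setU1 => /orP[/eqP -> /=|pD0]; first by lia.
    exact: free_i (subsetP (subsetDl _ _) _ pD0).
  - by rewrite in_setU1 => /orP[/eqP -> /=|/free_l]; first by lia.
split => //.
- rewrite cardsU1 il_new cardsU1 kj_new (cardsD1 (i, j) D) ijD (cardsD1 (k, l) (D :\ (i, j))).
  by rewrite klD'.
- move=> a b lt_ba; rewrite (rk_setD1 a b ijD) (rk_setD1 a b klD') -/D0.
  rewrite (rk_setU1 a b il_new) (rk_setU1 a b kj_new) /rect /= -!addnA.
  by congr (_ + _); lia.
Qed.
End Moves.

Section Drops.
Variable n : nat.
Local Notation pos := ('I_n * 'I_n)%type.
Implicit Types (D T S M : {set pos}).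

Definition covby T D : Prop := ~ exists S, [/\ rook S, ltR T S & ltR S D].

Lemma drops_lt D M (i j x y : nat) : drops_by D M i j x y ->
  x < i -> j < y -> j < i -> rank_le M D /\ M != D.
Proof.
move=> drop lt_xi lt_jy lt_ji; split; first by move=> a b /andP[lt_ba _]; rewrite drop //; lia.
by apply/eqP => eq_MD; have := drop i j lt_ji; rewrite eq_MD /rect; lia.
Qed.

Lemma drops_le D M T (i j x y : nat) : rank_le T D -> drops_by D M i j x y ->
  (forall a b, b < a -> rect i j x y a b -> rk T a b < rk D a b) -> rank_le T M.
Proof.
move=> le_TD drop strict a b h; have lt_ba : b < a by case/andP: h.
have := le_TD a b h; rewrite drop //; case: (boolP (rect i j x y a b)) => r; last by lia.
by have := strict a b lt_ba r; rewrite drop //; lia.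
Qed.

Lemma drops_corners D T M (i j x y x' y' : nat) : rank_le T M ->
  drops_by D T i j x y -> drops_by D M i j x' y' ->
  j < x -> x <= y -> y < i -> i < n -> x' < i -> j < y' -> x <= x' /\ y' <= y.
Proof.
move=> le_TM dropT dropM lt_jx le_xy lt_yi lt_in lt_x'i lt_jy'.
have sub a b : b < a < n -> rect i j x' y' a b <= rect i j x y a b.
  move=> h; have lt_ba : b < a by case/andP: h.
  by have := le_TM a b h; have := dropT a b lt_ba; have := dropM a b lt_ba; lia.
have := sub x j; have := sub i y; rewrite /rect; lia.
Qed.

Lemma covby_subdrop D T S (i j x y x' y' a0 b0 : nat) : covby T D -> rookP S ->
  drops_by D T i j x y -> drops_by D S i j x' y' ->
  x <= x' -> y' <= y -> x' < i -> j < y' -> j < i ->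
  b0 < a0 -> rect i j x y a0 b0 -> ~~ rect i j x' y' a0 b0 -> False.
Proof.
move=> cov rS dropT dropS le_xx' le_y'y lt_x'i lt_jy' lt_ji lt_ba0 in_T out_S.
apply: cov; exists S; split; first by apply/rookE.
- apply/ltRP; split; first by move=> a b /andP[lt_ba _]; have := dropT a b lt_ba; rewrite dropS // /rect; lia.
  apply/eqP => eq_TS; have := dropT a0 b0 lt_ba0; rewrite dropS // eq_TS.
  by rewrite (negbTE out_S) in_T; lia.
- by apply/ltRP; apply: drops_lt dropS lt_x'i lt_jy' lt_ji.
Qed.

Lemma tight_row_gap D T (a w : nat) : rookP T ->
  rk D a w = rk T a w -> rk T a.+1 w < rk D a.+1 w ->
  forall p, p \in D -> p.1 = a :> nat -> w < p.2.
Proof.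
move=> rT tight loose p pD p1; rewrite ltnNge; apply/negP => p2.
have : 0 < row_seg D a w by apply/card_gt0P; exists p; rewrite !inE pD p1 eqxx p2.
have := rk_row D a w; have := rk_row T a w; have := row_seg_le1 a w rT; lia.
Qed.

Lemma tight_col_gap D T (a y : nat) : rookP T -> 0 < y ->
  rk D a y = rk T a y -> rk T a y.-1 < rk D a y.-1 ->
  forall p, p \in D -> p.2 = y :> nat -> p.1 < a.
Proof.
move=> rT y_gt0 tight loose p pD p2; rewrite ltnNge; apply/negP => p1.
have : 0 < col_seg D a y by apply/card_gt0P; exists p; rewrite !inE pD p2 eqxx p1.
have := rk_col D a y.-1; have := rk_col T a y.-1; rewrite prednK //.
have := col_seg_le1 a y rT; lia.
Qed.
End Drops.

Section Lift.
Variables (n : nat) (D T : {set 'I_n * 'I_n}) (i j : 'I_n).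

Definition below_split : Prop :=
  exists x y : 'I_n, [/\ j < x <= y, y < i, row_free D x, col_free D y &
                         rank_le T (Dmove D i j x y)].

Definition below_small : Prop :=
  exists M (x y : nat), [/\ rookP M, #|M| <= #|D|, rank_le T M, drops_by D M i j x y &
    [/\ j <= x < i, j < y <= i &
        [\/ x = j, y = i | exists k l : 'I_n, [/\ (k, l) \in D, k = x :> nat & l = y :> nat]]]].

Hypotheses (rD : rookP D) (rT : rookP T) (le_TD : rank_le T D) (ijD : (i, j) \in D).

Definition strict_on (x y : nat) : Prop :=
  forall a b, b < a -> rect i j x y a b -> rk T a b < rk D a b.

Lemma delete_cover : strict_on j i -> below_small.
Proof.
move=> strict; have [rM card_M drop] := delete_move rD ijD.
have lt_ji : j < i := rookP_Phi rD ijD.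
exists (D :\ (i, j)), j, i; split => //; first exact: drops_le drop strict.
by split; [lia | lia | constructor 1].
Qed.

Lemma up_cover (x : 'I_n) : j < x < i -> row_free D x -> strict_on x i -> below_small.
Proof.
move=> jxi free_x strict; have [rM card_M drop] := up_move rD ijD jxi free_x.
exists ((x, j) |: (D :\ (i, j))), x, i; split => //; first exact: drops_le drop strict.
by split; [lia | lia | constructor 2].
Qed.

Lemma right_cover (y : 'I_n) : j < y < i -> col_free D y -> strict_on j y -> below_small.
Proof.
move=> jyi free_y strict; have [rM card_M drop] := right_move rD ijD jyi free_y.
exists ((i, y) |: (D :\ (i, j))), j, y; split => //; first exact: drops_le drop strict.
by split; [lia | lia | constructor 1].
Qed.

Lemma swap_cover (k l : 'I_n) : (k, l) \in D -> j < l -> l < k -> k < i -> strict_on k l ->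
  below_small.
Proof.
move=> klD lt_jl lt_lk lt_ki strict; have [rM card_M drop] := swap_move rD ijD klD lt_jl lt_lk lt_ki.
exists (swap D i j k l), k, l; split; rewrite ?card_M //; first exact: drops_le drop strict.
by split; [lia | lia | constructor 3; exists k, l].
Qed.

Lemma split_cover (x y : 'I_n) : j < x -> x <= y -> y < i -> row_free D x -> col_free D y ->
  strict_on x y -> below_split.
Proof.
move=> lt_jx le_xy lt_yi free_x free_y strict.
have [_ _ drop] := split_move rD ijD lt_jx le_xy lt_yi free_x free_y.
by exists x, y; rewrite lt_jx le_xy; split => //; apply: drops_le drop strict.
Qed.

Lemma strict_on_sub (x y x' y' : nat) : x <= x' -> y' <= y -> strict_on x y -> strict_on x' y'.
Proof. by move=> le_x le_y strict a b lt_ba r; apply: strict => //; move: r; rewrite /rect; lia. Qed.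

Definition tight (a b : nat) : bool := [&& b < a, a <= i, j <= b & rk D a b == rk T a b].

Lemma tight_bound a b : tight a b -> b < a < n.
Proof. by case/and4P => lt_ba le_ai _ _; rewrite lt_ba (leq_ltn_trans le_ai (ltn_ord i)). Qed.

Lemma loose a b : b < a -> a <= i -> j <= b -> ~~ tight a b -> rk T a b < rk D a b.
Proof.
move=> lt_ba le_ai le_jb; rewrite /tight lt_ba le_ai le_jb /= ltn_neqAle eq_sym => ->.
by rewrite le_TD // lt_ba (leq_ltn_trans le_ai (ltn_ord i)).
Qed.

Lemma lift_no_tight : (forall a b, ~~ tight a b) -> below_small.
Proof.
move=> none; apply: delete_cover => a b lt_ba /andP[/andP[_ le_ai] /andP[le_jb _]].
exact: loose (none a b).
Qed.

(* Tight entries exist, none in row i; x is the lowest row containing one.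
   Row x of D is empty up to column w, so (i, j) either swaps with the point
   of row x or moves up into the empty row x. *)
Lemma lift_top (x : 'I_n) (w : nat) : x < i -> tight x w ->
  (forall a b, tight a b -> a <= x) -> below_small.
Proof.
move=> lt_xi tight_xw x_max.
have strict : strict_on x i.
  move=> a b lt_ba /andP[/andP[lt_xa le_ai] /andP[le_jb _]]; apply: loose => //.
  by apply/negP => /x_max; rewrite leqNgt lt_xa.
move: tight_xw => /and4P[lt_wx _ le_jw /eqP eq_xw].
have loose_next : rk T x.+1 w < rk D x.+1 w by apply: strict; rewrite /rect; lia.
have gap := tight_row_gap rT eq_xw loose_next.
case: (boolP [exists l : 'I_n, (x, l) \in D]) => [/existsP[l xlD]|/existsPn none].
- have lt_wl : w < l by apply: (gap (x, l)).
  have lt_lx : l < x := rookP_Phi rD xlD.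
  by apply: (swap_cover xlD) => //; [lia | apply: strict_on_sub strict; lia].
- by apply: (up_cover (x := x)); [lia | apply: row_free_of | ].
Qed.

(* Tight entries exist, none in column j; y is the leftmost column containing
   one.  Symmetric to lift_top, with columns in place of rows. *)
Lemma lift_left (y : 'I_n) (w : nat) : j < y -> tight w y ->
  (forall a b, tight a b -> y <= b) -> below_small.
Proof.
move=> lt_jy tight_wy y_min.
have strict : strict_on j y.
  move=> a b lt_ba /andP[/andP[_ le_ai] /andP[le_jb lt_by]]; apply: loose => //.
  by apply/negP => /y_min; rewrite leqNgt lt_by.
move: tight_wy => /and4P[lt_yw le_wi _ /eqP eq_wy].
have loose_prev : rk T w y.-1 < rk D w y.-1 by apply: strict; rewrite /rect; lia.
have gap := tight_col_gap rT (leq_ltn_trans (leq0n j) lt_jy) eq_wy loose_prev.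
case: (boolP [exists k : 'I_n, (k, y) \in D]) => [/existsP[k kyD]|/existsPn none].
- have lt_kw : k < w by apply: (gap (k, y)).
  have lt_yk : y < k := rookP_Phi rD kyD.
  by apply: (swap_cover kyD) => //; [lia | apply: strict_on_sub strict; lia].
- by apply: (right_cover (y := y)); [lia | apply: col_free_of | ].
Qed.

(* If T meets D at (x1, w) and at (i, b0) with w < b0 < x1 < i, and is
   strictly below D on rect i j x1 b0, then D has a point in the box
   [x1, i) x (w, b0] (by inclusion-exclusion of rank counts), and swapping
   (i, j) with it gives an outcome. *)
Lemma corner_box (x1 b0 : 'I_n) (w : nat) : j <= w -> w < b0 -> b0 < x1 -> x1 < i ->
  rk D x1 w = rk T x1 w -> rk D i b0 = rk T i b0 -> strict_on x1 b0 -> below_small.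
Proof.
move=> le_jw lt_wb0 lt_b0x1 lt_x1i eq_x1w eq_ib0 strict.
have : 0 < box D x1 i w b0.
  have := rk_box D (ltnW lt_x1i) (ltnW lt_wb0); have := rk_box T (ltnW lt_x1i) (ltnW lt_wb0).
  have : rk T x1 b0 <= rk D x1 b0 by apply: le_TD; rewrite lt_b0x1 ltn_ord.
  have : rk T i w < rk D i w by apply: strict; rewrite /rect; lia.
  lia.
case/card_gt0P => -[k l]; rewrite !inE /= => /andP[klD /andP[/andP[le_x1k lt_ki] /andP[lt_wl le_lb0]]].
have lt_lk : l < k := rookP_Phi rD klD.
by apply: (swap_cover klD) => //; [lia | apply: strict_on_sub strict].
Qed.

(* Tight entries exist in row i and in column j.  Let b0 be the leftmost
   tight column of row i and x1 the lowest row with a tight entry (x1, w) left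
   of b0.  Then T is strictly below D on rect i j x1 b0, and either a point
   of D in the box [x1, i) x (w, b0], in row x1, or in column b0 can be
   swapped with (i, j), or (i, j) splits into (x1, j) and (i, b0). *)
Lemma lift_corner (b0 x1 : 'I_n) (w : nat) : j < b0 -> tight i b0 ->
  (forall b, tight i b -> b0 <= b) -> w < b0 -> tight x1 w ->
  (forall a b, b < b0 -> tight a b -> a <= x1) -> below_small \/ below_split.
Proof.
move=> lt_jb0 /and4P[lt_b0i _ _ /eqP eq_ib0] b0_min lt_wb0 /and4P[lt_wx1 le_x1i le_jw /eqP eq_x1w] x1_max.
have lt_x1i : x1 < i.
  rewrite ltn_neqAle le_x1i andbT; apply/eqP => e.
  have : b0 <= w by apply: b0_min; rewrite /tight -e lt_wx1 leqnn le_jw eq_x1w /=.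
  by rewrite leqNgt lt_wb0.
have strict : strict_on x1 b0.
  move=> a b lt_ba /andP[/andP[lt_x1a le_ai] /andP[le_jb lt_bb0]]; apply: loose => //.
  by apply/negP => /(x1_max _ _ lt_bb0); rewrite leqNgt lt_x1a.
case: (ltnP b0 x1) => [lt_b0x1 | le_x1b0]; first by left; apply: (corner_box le_jw lt_wb0 lt_b0x1 lt_x1i eq_x1w eq_ib0 strict).
have loose_next : rk T x1.+1 w < rk D x1.+1 w by apply: strict; rewrite /rect; lia.
have row_gap := tight_row_gap rT eq_x1w loose_next.
have loose_prev : rk T i b0.-1 < rk D i b0.-1 by apply: strict; rewrite /rect; lia.
have col_gap := tight_col_gap rT (leq_ltn_trans (leq0n j) lt_jb0) eq_ib0 loose_prev.
case: (boolP [exists l : 'I_n, (x1, l) \in D]) => [/existsP[l xlD]|/existsPn row_none].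
  have lt_wl : w < l by apply: (row_gap (x1, l)).
  have lt_lx1 : l < x1 := rookP_Phi rD xlD.
  by left; apply: (swap_cover xlD); try lia; apply: strict_on_sub strict; lia.
case: (boolP [exists k : 'I_n, (k, b0) \in D]) => [/existsP[k kbD]|/existsPn col_none].
  have lt_ki : k < i by apply: (col_gap (k, b0)).
  have lt_b0k : b0 < k := rookP_Phi rD kbD.
  by left; apply: (swap_cover kbD); try lia; apply: strict_on_sub strict; lia.
right; apply: (split_cover (x := x1) (y := b0)) => //; first by lia.
- exact: row_free_of.
- exact: col_free_of.
Qed.

Definition tight_row a : bool := [exists b : 'I_n, tight a b].
Definition tight_col b : bool := [exists a : 'I_n, tight a b].

Lemma tight_rowI a b : tight a b -> tight_row a.
Proof.
move=> t; have /andP[lt_ba lt_an] := tight_bound t.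
by apply/existsP; exists (Ordinal (ltn_trans lt_ba lt_an)).
Qed.

Lemma tight_colI a b : tight a b -> tight_col b.
Proof. by move=> t; have /andP[_ lt_an] := tight_bound t; apply/existsP; exists (Ordinal lt_an). Qed.

Lemma tight_row_le a : tight_row a -> a <= i.
Proof. by case/existsP => b /and4P[]. Qed.

Lemma lift_row_col : ~~ tight i j -> tight_row i -> tight_col j -> below_small \/ below_split.
Proof.
move=> loose_ij /existsP[b1 tb1] /existsP[a1 ta1].
case: (ex_minnP (ex_intro (tight i) _ tb1)) => b0 tb0 b0_min.
have /andP[lt_b0i _] := tight_bound tb0.
have lt_jb0 : j < b0.
  have /and4P[_ _ le_jb0 _] := tb0; rewrite ltn_neqAle le_jb0 andbT.
  by apply: contraNneq loose_ij => ->.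
pose left_of_b0 a := [exists b : 'I_n, (b < b0) && tight a b].
have ex_left : exists a, left_of_b0 a by exists a1; apply/existsP; exists j; rewrite lt_jb0.
have ub_left a : left_of_b0 a -> a <= i.
  by case/existsP => b /andP[_ /tight_rowI /tight_row_le].
case: (ex_maxnP ex_left ub_left) => x1 /existsP[w /andP[lt_wb0 tw]] x1_max.
have /andP[_ lt_x1n] := tight_bound tw.
have lt_b0n := ltn_trans lt_b0i (ltn_ord i).
apply: (lift_corner (b0 := Ordinal lt_b0n) (x1 := Ordinal lt_x1n) (w := w)) => //= a b lt_bb0 tab.
have /andP[lt_ba lt_an] := tight_bound tab.
by apply: x1_max; apply/existsP; exists (Ordinal (ltn_trans lt_ba lt_an)); rewrite /= lt_bb0.
Qed.

Lemma lift : rk T i j < rk D i j -> below_small \/ below_split.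
Proof.
move=> lt_ij; have loose_ij : ~~ tight i j by rewrite /tight eq_sym (ltn_eqF lt_ij) !andbF.
case: (boolP [exists a : 'I_n, tight_row a]) => [/existsP[a0 /existsP[b0 t0]]|/existsPn none].
  case: (boolP (tight_row i)) => [row_i|no_row_i].
    case: (boolP (tight_col j)) => [col_j|no_col_j]; first exact: lift_row_col.
    case: (ex_minnP (ex_intro tight_col _ (tight_colI t0))) => y /existsP[w tw] y_min.
    have /andP[lt_yw lt_wn] := tight_bound tw.
    left; apply: (lift_left (y := Ordinal (ltn_trans lt_yw lt_wn)) (w := w)) => //=.
      have /and4P[_ _ le_jy _] := tw; rewrite ltn_neqAle le_jy andbT.
      by apply: contraNneq no_col_j => ->; apply: tight_colI tw.
    by move=> a b /tight_colI; apply: y_min.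
  case: (ex_maxnP (ex_intro tight_row _ (tight_rowI t0)) tight_row_le) => x /existsP[w tw] x_max.
  have /andP[lt_wx lt_xn] := tight_bound tw.
  left; apply: (lift_top (x := Ordinal lt_xn) (w := w)) => //=.
    rewrite ltn_neqAle (tight_row_le (tight_rowI tw)) andbT.
    by apply: contraNneq no_row_i => <-; apply: tight_rowI tw.
  by move=> a b /tight_rowI; apply: x_max.
left; apply: lift_no_tight => a b; apply/negP => t; have /andP[_ lt_an] := tight_bound t.
by move: (none (Ordinal lt_an)); rewrite (tight_rowI t).
Qed.
End Lift.

Section SplitMinimal.
Variables (n : nat) (D : {set 'I_n * 'I_n}) (i j x y : 'I_n).
Hypotheses (rD : rookP D) (ijD : (i, j) \in D) (lt_jx : j < x) (le_xy : x <= y) (lt_yi : y < i)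
  (free_x : row_free D x) (free_y : col_free D y).
Hypothesis cov : covby (Dmove D i j x y) D.

Let drop_xy : drops_by D (Dmove D i j x y) i j x y.
Proof. by have [] := split_move rD ijD lt_jx le_xy lt_yi free_x free_y. Qed.

(* A split of D covered by D is minimal: another split at (i, j) with a
   corner (x', y') inside, lowering a proper subrectangle (it misses the
   entry (a0, b0)), would lie strictly in between. *)
Lemma minimal_split_free (x' y' : 'I_n) (a0 b0 : nat) : j < x' -> x' <= y' -> y' < i ->
  row_free D x' -> col_free D y' -> x <= x' -> y' <= y ->
  b0 < a0 -> rect i j x y a0 b0 -> ~~ rect i j x' y' a0 b0 -> False.
Proof.
move=> lt_jx' le_xy' lt_y'i free_x' free_y' le_xx' le_y'y lt_ba0 in_T out_S.
have [rS _ dropS] := split_move rD ijD lt_jx' le_xy' lt_y'i free_x' free_y'.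
by apply: (covby_subdrop (a0 := a0) (b0 := b0) cov rS drop_xy dropS) => //; lia.
Qed.

(* Lines strictly between x and y are occupied (else split at (k, y) or
   at (x, k)). *)
Lemma minimal_between (k : 'I_n) : x < k < y -> rowD D k != set0 /\ colD D k != set0.
Proof.
move=> /andP[lt_xk lt_ky]; split; apply/negP => /eqP.
- move/row_freeE => free_k.
  by apply: (minimal_split_free (a0 := k) (b0 := j) _ _ _ free_k free_y); rewrite /rect; lia.
- move/col_freeE => free_k.
  by apply: (minimal_split_free (a0 := i) (b0 := k) _ _ _ free_x free_k); rewrite /rect; lia.
Qed.

(* If x < y, row y and column x are occupied (else split at (y, y) or at
   (x, x)). *)
Lemma minimal_ends : x != y -> rowD D y != set0 /\ colD D x != set0.
Proof.
move=> ne_xy; have lt_xy : x < y by rewrite ltn_neqAle ne_xy le_xy.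
split; apply/negP => /eqP.
- move/row_freeE => free_y'.
  by apply: (minimal_split_free (a0 := y) (b0 := j) _ _ _ free_y' free_y); rewrite /rect; lia.
- move/col_freeE => free_x'.
  by apply: (minimal_split_free (a0 := i) (b0 := x) _ _ _ free_x free_x'); rewrite /rect; lia.
Qed.

(* Every rook of D below-left of (i, j) and outside the rectangle is also
   below-left of (i, y): a rook (k, l) strictly inside could be swapped with
   (i, j), lowering only a proper subrectangle. *)
Lemma minimal_points p : p \in D -> ltPhi p (i, j) -> ~~ ltPhi p (x, j) -> ltPhi p (i, y).
Proof.
case: p => k l klD; rewrite /ltPhi /lePhi !pos_eqE /= => lt_ij not_xj.
apply: contraT => not_iy; have [_ row1 col1] := rD.
have ne_kx : k != x :> nat by apply/eqP; apply: free_x klD.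
have ne_ly : l != y :> nat by apply/eqP; apply: free_y klD.
have lt_lk : l < k := rookP_Phi rD klD.
have ne_ki : k != i :> nat.
  by apply/eqP => e; have [_ e2] := row1 _ _ klD ijD e; move: lt_ij; rewrite e e2 !eqxx andbF.
have ne_lj : l != j :> nat.
  by apply/eqP => e; have [e1 _] := col1 _ _ klD ijD e; move: lt_ij; rewrite e e1 !eqxx andbF.
have lt_jl : j < l by lia.
have lt_ki : k < i by lia.
have [rS _ dropS] := swap_move rD ijD klD lt_jl lt_lk lt_ki.
by exfalso; apply: (covby_subdrop (a0 := k) (b0 := j) cov rS drop_xy dropS); rewrite /rect; lia.
Qed.
End SplitMinimal.

Section SplitCovered.
Variables (n : nat) (D : {set 'I_n * 'I_n}) (i j x y : 'I_n).
Hypotheses (rD : rookP D) (ijD : (i, j) \in D) (lt_jx : j < x) (le_xy : x <= y) (lt_yi : y < i)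
  (free_x : row_free D x) (free_y : col_free D y).
Hypothesis between :
  forall k : 'I_n, x < k < y -> rowD D k != set0 /\ colD D k != set0.
Hypothesis points :
  forall p, p \in D -> ltPhi p (i, j) -> ~~ ltPhi p (x, j) -> ltPhi p (i, y).
Hypothesis ends : x != y -> rowD D y != set0 /\ colD D x != set0.

Lemma rect_point (k l : 'I_n) : (k, l) \in D -> rect i j x y k l -> (k, l) = (i, j).
Proof.
move=> klD /andP[/andP[lt_xk le_ki] /andP[le_jl lt_ly]]; apply/eqP; apply: contraT => ne_ij.
have lt_ij : ltPhi (k, l) (i, j) by rewrite /ltPhi /lePhi /= le_ki le_jl ne_ij.
have not_xj : ~~ ltPhi (k, l) (x, j) by rewrite /ltPhi /lePhi /= leqNgt lt_xk.
by have := points klD lt_ij not_xj; rewrite /ltPhi /lePhi /= (leqNgt y) lt_ly andbF.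
Qed.

(* A split at (i, j) between the given one and D has the same corner:
   a larger x' or smaller y' would sit on an empty row or column forbidden
   by the conditions. *)
Lemma split_corner_eq (x' y' : 'I_n) : x <= x' -> x' <= y' -> y' <= y ->
  row_free D x' -> col_free D y' -> x' = x /\ y' = y.
Proof.
move=> le_xx' le_xy' le_y'y free_x' free_y'; split; apply: val_inj => /=; apply/eqP.
- rewrite eqn_leq le_xx' andbT leqNgt; apply/negP => lt_xx'.
  have [lt_x'y|eq_x'y] : x' < y \/ x' = y :> nat by lia.
    have [nonempty _] := between (introT andP (conj lt_xx' lt_x'y)).
    by case/eqP: nonempty; apply/row_freeE.
  have ne_xy : x != y by apply: contraTneq lt_xx' => ->; rewrite eq_x'y ltnn.
  have [nonempty _] := ends ne_xy; case/eqP: nonempty; apply/row_freeE => p pD e.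
  by apply: (free_x' p pD); rewrite e eq_x'y.
- rewrite eqn_leq le_y'y /= leqNgt; apply/negP => lt_y'y.
  have [lt_xy'|eq_xy'] : x < y' \/ x = y' :> nat by lia.
    have [_ nonempty] := between (introT andP (conj lt_xy' lt_y'y)).
    by case/eqP: nonempty; apply/col_freeE.
  have ne_xy : x != y by apply: contraTneq lt_y'y => <-; rewrite -eq_xy' ltnn.
  have [_ nonempty] := ends ne_xy; case/eqP: nonempty; apply/col_freeE => p pD e.
  by apply: (free_y' p pD); rewrite e -eq_xy'.
Qed.

Let drop_xy : drops_by D (Dmove D i j x y) i j x y.
Proof. by have [] := split_move rD ijD lt_jx le_xy lt_yi free_x free_y. Qed.

(* Above the split and strictly below D, the rank at (i, j) already drops:
   a strict point of D must lie in the lowered rectangle, hence be (i, j). *)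
Lemma split_strict_corner S : rookP S -> rank_le (Dmove D i j x y) S -> rank_le S D ->
  S != D -> rk S i j < rk D i j.
Proof.
move=> rS le_TS le_SD ne_SD; have [[k l] klD /= lt_kl] := strict_point rS rD le_SD ne_SD.
have lt_lk : l < k := rookP_Phi rD klD.
have in_rect : rect i j x y k l.
  apply: contraT => out; have := drop_xy lt_lk; rewrite (negbTE out) addn0.
  have : rk (Dmove D i j x y) k l <= rk S k l by apply: le_TS; rewrite lt_lk ltn_ord.
  lia.
by case: (rect_point klD in_rect) lt_kl => -> ->.
Qed.

(* Nothing lies strictly between the split and D: lifting the strict corner
   yields a move above S whose rectangle sits inside that of the split,
   which the conditions rule out. *)
Lemma split_covby : covby (Dmove D i j x y) D.
Proof.
move=> [S [/rookE rS /ltRP[le_TS ne_TS] /ltRP[le_SD ne_SD]]].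
have lt_ij := split_strict_corner rS le_TS le_SD ne_SD.
have i_n := ltn_ord i.
case: (lift rD rS le_SD ijD lt_ij) => [small|split].
- case: small => M [x' [y' [_ _ le_SM dropM [/andP[_ lt_x'i] /andP[lt_jy' _] corner]]]].
  have [le_xx' le_y'y] := drops_corners (rank_le_trans le_TS le_SM) drop_xy dropM
    lt_jx le_xy lt_yi i_n lt_x'i lt_jy'.
  case: corner => [e|e|[k [l [klD ek el]]]]; [lia | lia | ].
  have ne_kx : k != x :> nat by apply/eqP; apply: free_x klD.
  have ne_ly : l != y :> nat by apply/eqP; apply: free_y klD.
  have : rect i j x y k l by rewrite /rect; lia.
  by move/(rect_point klD) => [ek']; move: lt_x'i; rewrite -ek -ek' ltnn.
- case: split => x' [y' [/andP[lt_jx' le_xy'] lt_y'i free_x' free_y' le_SM]].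
  have [_ _ dropM] := split_move rD ijD lt_jx' le_xy' lt_y'i free_x' free_y'.
  have [le_xx' le_y'y] := drops_corners (rank_le_trans le_TS le_SM) drop_xy dropM
    lt_jx le_xy lt_yi i_n (leq_ltn_trans le_xy' lt_y'i) (leq_trans lt_jx' le_xy').
  have [ex ey] := split_corner_eq le_xx' le_xy' le_y'y free_x' free_y'.
  rewrite ex ey in le_SM; have [rT _ _] := split_move rD ijD lt_jx le_xy lt_yi free_x free_y.
  by case/eqP: ne_TS; apply: rank_le_anti.
Qed.
End SplitCovered.

Section Characterisation.
Variables (n : nat) (D : {set 'I_n * 'I_n}).
Hypothesis rD : rookP D.

(* A placement covered by D with more rooks than D is a split of D: lift a
   strict point of D; a move with no more rooks than D would lie strictly in
   between, so the move is a split, which then equals T and is minimal. *)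
Lemma lplus_nplus T : Lplus D T -> Nplus D T.
Proof.
case=> /rookE rT /ltRP[le_TD ne_TD] card_T cov.
have [[i j] ijD /= lt_ij] := strict_point rT rD le_TD ne_TD.
have lt_ji : j < i := rookP_Phi rD ijD.
case: (lift rD rT le_TD ijD lt_ij) => [small|split].
  case: small => M [x' [y' [rM card_M le_TM dropM [/andP[_ lt_x'i] /andP[lt_jy' _] _]]]].
  case: cov; exists M; split; first by apply/rookE.
    by apply/ltRP; split => //; apply: contraTneq card_M => <-; rewrite -ltnNge.
  by apply/ltRP; apply: drops_lt dropM lt_x'i lt_jy' lt_ji.
case: split => x [y [/andP[lt_jx le_xy] lt_yi free_x free_y le_T]].
have [rS _ dropS] := split_move rD ijD lt_jx le_xy lt_yi free_x free_y.
have eq_T : T = Dmove D i j x y.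
  apply/eqP; apply: contraT => ne_T; case: cov; exists (Dmove D i j x y).
  split; first by apply/rookE.
    by apply/ltRP.
  by apply/ltRP; apply: drops_lt dropS _ _ lt_ji; lia.
rewrite eq_T in cov; exists i, j, x, y; split => //; split.
- by do !split.
- by split; [apply/row_freeE | apply/col_freeE].
- exact: (minimal_between rD ijD lt_jx le_xy lt_yi free_x free_y cov).
- exact: (minimal_points rD ijD lt_jx le_xy lt_yi free_x free_y cov).
- exact: (minimal_ends rD ijD lt_jx le_xy lt_yi free_x free_y cov).
Qed.

Lemma nplus_lplus T : Nplus D T -> Lplus D T.
Proof.
case=> i [j [x [y [ijD [[lt_yi [le_xy lt_jx]] [/row_freeE free_x /col_freeE free_y]
  between points ends] ->]]]].
have lt_ji : j < i := rookP_Phi rD ijD.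
have [rT card_T dropT] := split_move rD ijD lt_jx le_xy lt_yi free_x free_y.
split; first by apply/rookE.
- by apply/ltRP; apply: drops_lt dropT _ _ lt_ji; lia.
- by rewrite card_T.
- exact: (split_covby rD ijD lt_jx le_xy lt_yi free_x free_y between points ends).
Qed.
End Characterisation.

Theorem lemma3p10 (n : nat) (D : {set 'I_n * 'I_n}) :
  rook D -> forall T : {set 'I_n * 'I_n}, Lplus D T <-> Nplus D T.
Proof. by move=> /rookE rD T; split; [apply: lplus_nplus | apply: nplus_lplus]. Qed.
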